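(* Let $N,K$ be positive integers, $\mathcal{N}=\{1,\dots,N\}$, and let $\underline{\mathsf{d}}$ be uniformly distributed over $\mathcal{N}^K$. Then for every integer $s$ with $1\le s\le\lceil\min\{N,K\}/4\rceil$, \[ \Pr\bigl(w(\underline{\mathsf{d}})\ge s\bigr)\ge 2/3, \] where $w(\underline{\mathsf{d}})$ is the number of distinct entries of $\underline{\mathsf{d}}$. *)

From mathcomp Require Import all_boot all_order all_algebra.
Set Implicit Arguments. Unset Strict Implicit. Unset Printing Implicit Defensive.
Import Order.TTheory GRing.Theory Num.Theory.

(* The alphabet N = {1..N} is modelled by 'I_N (relabelled 0..N-1);
   a demand vector d in N^K is a finite function {ffun 'I_K -> 'I_N}. *)

Definition nb_distinct (N K : nat) (d : {ffun 'I_K -> 'I_N}) : nat :=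
  #|[set d k | k : 'I_K]|.

Definition unif_prob (N K : nat) (A : pred {ffun 'I_K -> 'I_N}) : rat :=
  (#|A|%:R / #|{ffun 'I_K -> 'I_N}|%:R)%R.

Definition ceil_div4 (m : nat) : nat := (m + 3) %/ 4.

From mathcomp Require Import all_boot all_order all_algebra.
From mathcomp Require Import zify lra.
Import Order.TTheory GRing.Theory Num.Theory.

Set Implicit Arguments.
Unset Strict Implicit.

(* Let S_K(j) count the maps 'I_K -> T taking at most j values, and N = #|T|.
   Appending a last coordinate either adds a new value (N choices) or repeats
   one of at most j + 1 old ones, so S_(K+1)(j+1) <= N S_K(j) + (j+1) S_K(j+1),
   whence S_K(j) <= 2^K N^j j^(K-j) by induction on K.  For t = s - 1 with
   4t + 1 <= N, K we have 3 2^K <= 4^(K-t) and 4t <= N, which gives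
   3 S_K(t) <= N^K: at least two thirds of all maps take at least s values. *)

Lemma sum_nat_of_bool_card (T : finType) (A : {pred T}) :
  \sum_(x : T) (x \in A : nat) = #|A|.
Proof. by rewrite -sum1_card [RHS]big_mkcond; apply: eq_bigr => x _; case: (x \in A). Qed.

Section MapsWithFewValues.
Variable T : finType.

Definition extend_ffun K (f : {ffun 'I_K -> T}) (x : T) : {ffun 'I_K.+1 -> T} :=
  [ffun i => if unlift ord_max i is Some j then f j else x].

Definition restrict_ffun K (g : {ffun 'I_K.+1 -> T}) : {ffun 'I_K -> T} :=
  [ffun j => g (lift ord_max j)].

Lemma sum_ffunS K (F : {ffun 'I_K.+1 -> T} -> nat) :
  \sum_g F g = \sum_(f : {ffun 'I_K -> T}) \sum_(x : T) F (extend_ffun f x).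
Proof.
rewrite pair_big /= (reindex (fun p : {ffun 'I_K -> T} * T => extend_ffun p.1 p.2)) //.
exists (fun g => (restrict_ffun g, g ord_max)) => [[f x] _ | g _] /=.
  congr pair; last by rewrite ffunE unlift_none.
  by apply/ffunP => j; rewrite !ffunE liftK.
apply/ffunP => i; rewrite ffunE; case: unliftP => [j ->|->] //.
by rewrite ffunE.
Qed.

Definition range_card K (f : {ffun 'I_K -> T}) := #|[set f k | k : 'I_K]|.

Lemma range_card_extend K (f : {ffun 'I_K -> T}) x :
  range_card (extend_ffun f x) = (x \notin [set f k | k : 'I_K]) + range_card f.
Proof.
rewrite /range_card -cardsU1; congr #|pred_of_set _|; apply/setP => y.
apply/imsetP/setU1P.
  case=> k _ ->; rewrite ffunE; case: unliftP => [j _|_]; last by left.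
  by right; apply: imset_f.
case=> [->|/imsetP [j _ ->]].
  by exists ord_max; rewrite ?inE // ffunE unlift_none.
by exists (lift ord_max j); rewrite ?inE // ffunE liftK.
Qed.

Definition nb_range_le K j := #|[pred f : {ffun 'I_K -> T} | range_card f <= j]|.

Lemma nb_range_le_max K j : nb_range_le K j <= #|T| ^ K.
Proof. by rewrite -[K in _ ^ K]card_ord -card_ffun max_card. Qed.

Lemma nb_range_le0 K : nb_range_le K.+1 0 = 0.
Proof.
apply: eq_card0 => f; rewrite inE leqn0 cards_eq0 /=.
by apply/negP => /eqP/setP/(_ (f ord0)); rewrite inE imset_f.
Qed.

Lemma nb_range_leS K j :
  nb_range_le K.+1 j.+1 <= #|T| * nb_range_le K j + j.+1 * nb_range_le K j.+1.
Proof.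
rewrite /nb_range_le -!sum_nat_of_bool_card sum_ffunS !big_distrr -big_split /=.
apply: leq_sum => f _; set A := [set f k | k : 'I_K].
apply: (@leq_trans (\sum_(x : T) ((#|A| <= j) + (x \in A) * (#|A| <= j.+1)))).
  apply: leq_sum => x _; rewrite inE range_card_extend /range_card -/A.
  by case: (x \in A); rewrite /= ?add0n ?add1n ?mul1n ?mul0n ?addn0 ?ltnS ?leq_addl.
rewrite big_split /= sum_nat_const -big_distrl /= sum_nat_of_bool_card mulnC.
rewrite sum1_card !inE /range_card -/A mulnC leq_add2l.
by case: (leqP #|A| j.+1); rewrite ?muln1 ?muln0.
Qed.

Lemma nb_range_le_bound K j : 0 < #|T| ->
  nb_range_le K j <= 2 ^ K * #|T| ^ j * j ^ (K - j).
Proof.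
move=> T_gt0; set N := #|T|; elim: K j => [|K IH] j.
  by rewrite (leq_trans (nb_range_le_max _ _)) // mul1n sub0n muln1 expn_gt0 T_gt0.
have [K_lt_j | j_le_K] := ltnP K j.
  rewrite (leq_trans (nb_range_le_max _ _)) //.
  have -> : K.+1 - j = 0 by apply/eqP; rewrite subn_eq0.
  by rewrite muln1 (leq_trans (leq_pexp2l T_gt0 K_lt_j)) // leq_pmull // expn_gt0.
case: j j_le_K => [|i] i_lt_K; first by rewrite nb_range_le0.
have IHi : nb_range_le K i <= 2 ^ K * N ^ i * i.+1 ^ (K - i.+1).+1.
  by rewrite (leq_trans (IH i)) // subnSK // leq_mul2l leq_exp2r ?subn_gt0 ?leqnSn ?orbT.
apply: (leq_trans (nb_range_leS _ _)); rewrite subSS.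
apply: (@leq_trans (N * (2 ^ K * N ^ i * i.+1 ^ (K - i.+1).+1)
                   + i.+1 * (2 ^ K * N ^ i.+1 * i.+1 ^ (K - i.+1)))).
  by apply: leq_add; rewrite leq_mul2l ?IHi ?IH orbT.
rewrite -(subnSK i_lt_K) !expnS.
set a := 2 ^ K; set b := N ^ i; set c := i.+1 ^ (K - i.+1); nia.
Qed.

Lemma nb_range_le_third K t : 4 * t < #|T| -> 4 * t < K ->
  3 * nb_range_le K t <= #|T| ^ K.
Proof.
move=> tN tK; have T_gt0 : 0 < #|T| by lia.
case: t tN tK => [|t] tN tK.
  by case: K tK => // K _; rewrite nb_range_le0.
set u := t.+1 in tN tK *.
have pow2_le_pow4 : 3 * 2 ^ K <= 4 ^ (K - u).
  rewrite (_ : 4 = 2 ^ 2) // -expnM (@leq_trans (2 ^ 2 * 2 ^ K)) ?leq_mul //.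
  by rewrite -expnD leq_exp2l //; lia.
have splitK : #|T| ^ K = #|T| ^ u * #|T| ^ (K - u) by rewrite -expnD subnKC //; lia.
rewrite (leq_trans (leq_mul (leqnn 3) (nb_range_le_bound K u T_gt0))) // splitK.
apply: (@leq_trans (4 ^ (K - u) * #|T| ^ u * u ^ (K - u))).
  by rewrite !mulnA; apply: leq_mul => //; apply: leq_mul.
by rewrite mulnAC -expnMn mulnC leq_mul // leq_exp2r //; lia.
Qed.

Lemma card_range_gt K j :
  #|[pred f : {ffun 'I_K -> T} | j < range_card f]| = #|T| ^ K - nb_range_le K j.
Proof.
rewrite -[K in _ ^ K]card_ord -card_ffun -(cardC [pred f | range_card f <= j]) addKn.
by apply: eq_card => f; rewrite !inE ltnNge.
Qed.

End MapsWithFewValues.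

Theorem lemma2 (N K : nat) (hN : (0 < N)%N) (hK : (0 < K)%N) (s : nat)
  (hs1 : (1 <= s)%N) (hs2 : (s <= ceil_div4 (minn N K))%N) :
  ((2%:R / 3%:R : rat) <= unif_prob [pred d : {ffun 'I_K -> 'I_N} | (s <= nb_distinct d)%N])%R.
Proof.
case: s => [|t] in hs1 hs2 *; first by rewrite ltnn in hs1.
have ht : t.+1 * 4 <= minn N K + 3 by rewrite -leq_divRL.
have tN : 4 * t < #|'I_N| by rewrite card_ord; have := geq_minl N K; lia.
have tK : 4 * t < K by have := geq_minr N K; lia.
have third := nb_range_le_third tN tK; have le_all := nb_range_le_max 'I_N K t.
rewrite card_ord in third le_all.
have NK_gt0 : (0 < (N ^ K)%:R :> rat)%R by rewrite ltr0n expn_gt0 hN.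
(* [nb_distinct] is [range_card] at [T := 'I_N], so [card_range_gt] applies. *)
rewrite /unif_prob card_range_gt card_ffun !card_ord.
rewrite (ler_pdivlMr _ _ NK_gt0) (natrB _ le_all).
by move: third; rewrite -(ler_nat rat) natrM; lra.
Qed.
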